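(* Let $0\le d\le\rho(m)-1$ and let $n\ge h$ be an integer such that $n\not\equiv h-\rho(m)+L_1(d)+j\pmod{L_2}$ for every $j\in\{0,1,\dots,d\}$. Then \[ \sum_{f\in A(d)} y(n-f)\;<\;Tot(d). \]
   Context: For $u\in\mathbb{R}$ let $\mathbf 1[u]=1$ if $u\ge 0$ and $\mathbf 1[u]=0$ if $u<0$. Let $m$ be a positive integer and let $\rho(m)$ denote the number of primes $p$ with $2m<p<3m$; assume $\rho(m)\ge 2$. List these primes as $p_0>p_1>\dots>p_{\rho(m)-1}$ and put $\alpha_i=3m-p_i$. Let $k=(6m-1)\rho(m)$, $\mu_i=\lfloor k/p_i\rfloor$, $\beta_i=k-p_i\mu_i$. Define weights $\bar a_j$, $1\le j\le k$: if $\rho(m)$ is even, $\bar a_j=2$ if $j=\ell p_i$ for some $i$ and some $\ell$ with $1\le \ell\le 3\rho(m)/2$, $\bar a_j=-2$ if $j=\ell p_i$ with $3\rho(m)/2<\ell\le 2\rho(m)$, and $\bar a_j=0$ otherwise; if $\rho(m)$ is odd, $\bar a_j=2$ if $j=\ell p_i$ with $1\le\ell\le (3\rho(m)-1)/2$, $\bar a_j=-2$ if $j=\ell p_i$ with $(3\rho(m)+1)/2\le \ell\le 2\rho(m)-2$, $\bar a_j=-1$ if $j=\ell p_i$ with $\ell\in\{2\rho(m)-1,2\rho(m)\}$, and $\bar a_j=0$ otherwise (well defined since the sets $\{\ell p_i:1\le\ell\le2\rho(m)\}$ are pairwise disjoint). Let $\bar\theta=2\rho(m)$. For each $i$ define $x^{\alpha_i}(t)$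 for $0\le t\le k-1$ by $x^{\alpha_i}(t)=1$ if $t=\beta_i+\ell p_i$ for some $0\le \ell\le\mu_i-1$ and $x^{\alpha_i}(t)=0$ otherwise, and for $t\ge k$ by $x^{\alpha_i}(t)=\mathbf 1\big[\sum_{j=1}^k \bar a_j x^{\alpha_i}(t-j)-\bar\theta\big]$. Let $h=\rho(m)k$. For $1\le f\le h$ let $b_f=\bar a_j$ if $f=\rho(m)j$ with $1\le j\le k$, and $b_f=0$ otherwise. Define $(y(n))_{n\ge0}$ by $y(\rho(m)j+i)=x^{\alpha_i}(1+j)$ for $0\le j\le k-1$, $0\le i\le\rho(m)-1$, and $y(n)=\mathbf 1\big[\sum_{f=1}^h b_f y(n-f)-\bar\theta\big]$ for $n\ge h$. Let $L_1(d)=\rho(m)\cdot\mathrm{lcm}(p_0,\dots,p_d)$ for $0\le d\le\rho(m)-1$ and $L_2=\rho(m)\cdot\mathrm{lcm}(p_0,\dots,p_{\rho(m)-1})$. For $0\le d\le\rho(m)-1$ let $B_0(d)=\{f\in\mathbb Z:\ 1\le f\le h-d,\ y(h+L_1(d)-\rho(m)-f)=1\}$, $B_{\ell+1}(d)=\{1+f: f\in B_\ell(d)\}$ for $\ell\ge0$, $A(d)=\bigcup_{\ell=0}^{d}B_\ell(d)$, and $Tot(d)=|B_0(d)|$. *)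

From HB Require Import structures.
From mathcomp Require Import all_boot all_order all_algebra.
Set Implicit Arguments. Unset Strict Implicit. Unset Printing Implicit Defensive.
Import Order.TTheory GRing.Theory Num.Theory.

(* The primes p with 2m < p < 3m, listed in decreasing order p_0 > p_1 > ... *)
Definition plist (m : nat) : seq nat :=
  rev [seq p <- iota (2 * m).+1 (3 * m - (2 * m).+1) | prime p].

Definition rho (m : nat) : nat := size (plist m).

Definition pr (m i : nat) : nat := nth 0 (plist m) i.

Definition alpha (m i : nat) : nat := 3 * m - pr m i.

Definition kk (m : nat) : nat := (6 * m - 1) * rho m.

Definition mu (m i : nat) : nat := kk m %/ pr m i.

Definition beta (m i : nat) : nat := kk m - pr m i * mu m i.

(* weight attached to the multiplier l in j = l * p_i *)
Definition wgt (m l : nat) : int :=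
  if ~~ odd (rho m) then
    (if l <= (3 * rho m) %/ 2 then Posz 2 else (- Posz 2)%R)
  else
    (if l <= (3 * rho m - 1) %/ 2 then Posz 2
     else if l <= 2 * rho m - 2 then (- Posz 2)%R else (- Posz 1)%R).

(* bar a_j: if j = l * p_i with 1 <= l <= 2 rho(m) (i unique, by disjointness),
   the weight of l; otherwise 0. *)
Definition abar (m j : nat) : int :=
  let good := fun p => (p %| j) && (1 <= j %/ p <= 2 * rho m) in
  let i := find good (plist m) in
  if i < rho m then wgt m (j %/ pr m i) else 0%R.

Definition thetabar (m : nat) : int := Posz (2 * rho m).

Definition ind (u : int) : nat := if (0 <= u)%R then 1 else 0.

(* First N values of the sequence with initial values init t for t < K and
   recursion z(t) = 1[ sum_{j=1}^K w_j z(t-j) - theta ] for t >= K. *)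
Definition lin_rec (init : nat -> nat) (K : nat) (w : nat -> int) (theta : int)
    (N : nat) : seq nat :=
  iter N (fun s =>
    let t := size s in
    rcons s (if t < K then init t
             else ind ((\sum_(1 <= j < K.+1) w j * Posz (nth 0 s (t - j))) - theta)%R))
    [::].

Definition x_init (m i t : nat) : nat :=
  if has (fun l => t == beta m i + l * pr m i) (iota 0 (mu m i)) then 1 else 0.

Definition x (m i t : nat) : nat :=
  nth 0 (lin_rec (x_init m i) (kk m) (abar m) (thetabar m) t.+1) t.

Definition hh (m : nat) : nat := rho m * kk m.

Definition b (m f : nat) : int :=
  if (rho m %| f) && (1 <= f %/ rho m <= kk m) then abar m (f %/ rho m) else 0%R.

Definition y_init (m n : nat) : nat := x m (n %% rho m) (1 + n %/ rho m).

Definition y (m n : nat) : nat :=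
  nth 0 (lin_rec (y_init m) (hh m) (b m) (thetabar m) n.+1) n.

Definition L1 (m d : nat) : nat := rho m * \big[lcmn/1]_(i < d.+1) pr m i.
Definition L2 (m : nat) : nat := rho m * \big[lcmn/1]_(i < rho m) pr m i.

Definition B0 (m d : nat) : seq nat :=
  [seq f <- iota 1 (hh m - d) | y m (hh m + L1 m d - rho m - f) == 1].

Definition Bl (m d l : nat) : seq nat := [seq l + f | f <- B0 m d].

Definition A (m d : nat) : seq nat := undup (flatten [seq Bl m d l | l <- iota 0 d.+1]).

Definition Tot (m d : nat) : nat := size (B0 m d).

From HB Require Import structures.
From mathcomp Require Import all_boot all_order all_algebra.
From mathcomp Require Import zify.
Set Implicit Arguments. Unset Strict Implicit. Unset Printing Implicit Defensive.
Import Order.TTheory GRing.Theory Num.Theory.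

(* Convolving with
   the weights abar only sees the multiples l p_i (1 <= l <= 2 rho), and the
   weights of one prime add up to the threshold theta = 2 rho.  Hence a
   sequence starting as the indicator of a residue class modulo p_i keeps it:
   the p_i-multiples reproduce the class with weight exactly theta, while each
   other prime p_{i'} hits the class at most once, with weight <= 2, and not at
   all when the point lies in the class (recurrence_keeps_class).  This gives
   x^{alpha_i}(t) = [t = k mod p_i] and y(v) = W_{v mod rho}(v), where W_i is
   the indicator of the class rho (k - 1) + i modulo rho p_i, so y = sum_i W_i.

   Since k < p_i p_{i'}, two shifts g1 < g2 <= h congruent
   modulo rho cannot both hit two distinct classes (y_double_hit), while each
   class is hit at least 2 rho times by B_0(d), so Tot(d) >= 2 rho^2.  If
   n mod rho > d, every translate l + B_0 (l <= d) meets the support of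
   y(n - .) at most rho times, giving at most (d + 1) rho < Tot(d).  If
   l0 = n mod rho <= d, the hypothesis yields a class i0 with
   n <> N + l0 (mod rho p_{i0}), where N = h + L_1(d) - rho; that class
   contributes at most d, every class is dominated by the translate l0 + B_0,
   and the budget Tot(d) + d - 2 rho + d < Tot(d) concludes. *)

Section LinearThreshold.
Variables (init : nat -> nat) (K : nat) (w : nat -> int) (theta : int).

Definition lin_val (t : nat) : nat := nth 0 (lin_rec init K w theta t.+1) t.

Lemma lin_recS N : lin_rec init K w theta N.+1 =
  rcons (lin_rec init K w theta N)
   (let s := lin_rec init K w theta N in let t := size s in
    if t < K then init t
    else ind ((\sum_(1 <= j < K.+1) w j * Posz (nth 0 s (t - j))) - theta)%R).
Proof. by rewrite /lin_rec iterS. Qed.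

Lemma size_lin_rec N : size (lin_rec init K w theta N) = N.
Proof. by elim: N => [//|N IH]; rewrite lin_recS size_rcons IH. Qed.

Lemma nth_lin_rec N t : t < N ->
  nth 0 (lin_rec init K w theta N) t = lin_val t.
Proof.
elim: N => [//|N IH] Ht; case: (ltngtP t N) => [lt|gt|-> //].
- by rewrite lin_recS nth_rcons size_lin_rec lt IH.
- by move: Ht; rewrite ltnS leqNgt gt.
Qed.

Lemma lin_val_init t : t < K -> lin_val t = init t.
Proof.
by move=> Ht; rewrite /lin_val lin_recS nth_rcons size_lin_rec ltnn eqxx /= size_lin_rec Ht.
Qed.

Lemma lin_val_rec t : K <= t -> lin_val t =
  ind ((\sum_(1 <= j < K.+1) w j * Posz (lin_val (t - j))) - theta)%R.
Proof.
move=> Ht; rewrite /lin_val lin_recS nth_rcons size_lin_rec ltnn eqxx /= size_lin_rec.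
rewrite ltnNge Ht /=; congr (ind (_ - _)%R).
by apply: eq_big_nat => j /andP[j1 jK]; rewrite nth_lin_rec //; lia.
Qed.
End LinearThreshold.

Lemma big_pick_nat (R : Type) (idx : R) (op : Monoid.com_law idx) a b c (F : nat -> R) :
  a <= c < b -> \big[op/idx]_(a <= j < b) (if j == c then F j else idx) = F c.
Proof.
move=> /andP[ac cb]; rewrite (big_cat_nat _ (n := c)) //= ?(ltnW cb) // (big_ltn cb) eqxx.
have below : \big[op/idx]_(a <= j < c) (if j == c then F j else idx) = idx.
  by apply: big1_seq => j /andP[_]; rewrite mem_iota => /andP[_ jc]; rewrite ltn_eqF //; lia.
have above : \big[op/idx]_(c.+1 <= j < b) (if j == c then F j else idx) = idx.
  by apply: big1_seq => j /andP[_]; rewrite mem_iota => /andP[cj _]; rewrite gtn_eqF.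
by rewrite below above !Monoid.simpm.
Qed.

Lemma big_split_one (R : Type) (idx : R) (op : Monoid.com_law idx) a b c (F : nat -> R) :
  a <= c < b ->
  \big[op/idx]_(a <= j < b) F j =
  op (F c) (\big[op/idx]_(a <= j < b) (if j == c then idx else F j)).
Proof.
move=> Hc; rewrite -[F c](big_pick_nat op F Hc) -big_split /=.
by apply: eq_bigr => j _; case: (j == c); rewrite Monoid.simpm.
Qed.

Lemma leq_sum_nat a b (F G : nat -> nat) : (forall i, a <= i < b -> F i <= G i) ->
  \sum_(a <= i < b) F i <= \sum_(a <= i < b) G i.
Proof.
by move=> H; rewrite big_nat_cond [X in _ <= X]big_nat_cond; apply: leq_sum => i /andP[/H].
Qed.

Lemma sum_ge_term a b c (F : nat -> nat) : a <= c < b -> F c <= \sum_(a <= j < b) F j.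
Proof. by move=> H; rewrite (big_split_one _ _ H) leq_addr. Qed.

Lemma sum_01_le_len a b (F : nat -> nat) : (forall g, F g <= 1) ->
  \sum_(a <= g < b) F g <= b - a.
Proof.
move=> F1; apply: leq_trans (_ : \sum_(a <= g < b) 1 <= _); first exact: leq_sum.
by rewrite sum_nat_const_nat muln1.
Qed.

Lemma sum_01_le1 a b (F : nat -> nat) : (forall g, F g <= 1) ->
  (forall g1 g2, a <= g1 -> g1 < g2 -> g2 < b -> 0 < F g1 -> 0 < F g2 -> False) ->
  \sum_(a <= g < b) F g <= 1.
Proof.
move=> F1; elim: b => [|b IH] H; first by rewrite big_geq.
case: (leqP a b) => ab; last by rewrite big_geq.
rewrite big_nat_recr //=; case: (posnP (F b)) => [->|Fb].
  by rewrite addn0; apply: IH => g1 g2 *; apply: (H g1 g2) => //; lia.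
rewrite big1_seq ?add0n ?F1 // => g /andP[_]; rewrite mem_iota => /andP[ag gb].
by case: (posnP (F g)) => // Fg; case: (H g b) => //; lia.
Qed.

Lemma sum_01_pigeon R a b (F : nat -> nat) : 0 < R -> (forall g, F g <= 1) ->
  (forall g1 g2, a <= g1 -> g1 < g2 -> g2 < b -> g1 = g2 %[mod R] ->
     0 < F g1 -> 0 < F g2 -> False) ->
  \sum_(a <= g < b) F g <= R.
Proof.
move=> R0 F1 H.
have E g : F g = \sum_(0 <= c < R) (if c == g %% R then F g else 0).
  by rewrite (big_pick_nat _ (fun=> F g)) // ltn_pmod.
rewrite (eq_bigr _ (fun g _ => E g)) exchange_big_nat /=.
apply: leq_trans (_ : \sum_(0 <= c < R) 1 <= R); last by rewrite sum_nat_const_nat muln1 subn0.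
apply: leq_sum => c _; apply: sum_01_le1 => [g|g1 g2 ag1 g12 g2b]; first by case: eqP.
by case: eqP => // E1; case: eqP => // E2; apply: H => //; rewrite -E1 -E2.
Qed.

Lemma residue_count N c s q a : 0 < s -> a + q * s <= N.+1 ->
  q <= \sum_(a <= f < a + q * s) (N - f == c %[mod s]).
Proof.
move=> s0; elim: q a => [//|q IH] a H; rewrite mulSn in H.
rewrite (big_cat_nat _ (n := a + s)) /= ?mulSn; [|lia|lia].
rewrite addnA -[q.+1]add1n; apply: leq_add; last by apply: IH; lia.
pose r := (N - a + s - c %% s) %% s.
have rs : r < s by exact: ltn_pmod.
apply: leq_trans (sum_ge_term (fun f => (N - f == c %[mod s]) : nat) (_ : a <= a + r < a + s));
  last by rewrite leq_addr ltn_add2l rs.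
have Ediv := divn_eq (N - a + s - c %% s) s; have c's : c %% s < s by exact: ltn_pmod.
have -> : N - (a + r) = ((N - a + s - c %% s) %/ s - 1) * s + c %% s.
  rewrite mulnBl mul1n; have : s <= (N - a + s - c %% s) %/ s * s; last by lia.
  by rewrite -[X in X <= _]mul1n leq_pmul2r // divn_gt0 //; lia.
by rewrite modnMDl modn_mod eqxx.
Qed.

Lemma mem_plist m p : (p \in plist m) = prime p && (2 * m < p < 3 * m).
Proof.
rewrite /plist mem_rev mem_filter mem_iota; congr (_ && _).
by apply/idP/idP => /andP[h1 h2]; apply/andP; split; lia.
Qed.

Lemma pr_mem m i : i < rho m -> pr m i \in plist m.
Proof. exact: mem_nth. Qed.

Lemma pr_prime m i : i < rho m -> prime (pr m i).
Proof. by move=> /pr_mem; rewrite mem_plist => /andP[]. Qed.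

Lemma pr_gt0 m i : i < rho m -> 0 < pr m i.
Proof. by move=> /pr_prime /prime_gt0. Qed.

Lemma pr_bounds m i : i < rho m -> 2 * m < pr m i < 3 * m.
Proof. by move=> /pr_mem; rewrite mem_plist => /andP[]. Qed.

Lemma pr_inj m i j : i < rho m -> j < rho m -> pr m i = pr m j -> i = j.
Proof.
have uniq_plist : uniq (plist m) by rewrite rev_uniq filter_uniq // iota_uniq.
by move=> Hi Hj /eqP; rewrite (nth_uniq 0 Hi Hj uniq_plist) => /eqP.
Qed.

(* Of two consecutive integers >= 3 at most one is prime, so a window of n
   integers >= 3 contains at most ceil(n/2) primes. *)
Lemma count_prime_window n a : 3 <= a -> count prime (iota a n) <= n.+1./2.
Proof.
elim: n {-2}n (leqnn n) a => [|N IH] [|[|n]] Hn a Ha //=; try by case: (prime a).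
have pair_le1 : prime a + prime a.+1 <= 1.
  case pa: (prime a); case pa1: (prime a.+1) => //.
  have [a2|oa] := even_prime pa; first by rewrite a2 in Ha.
  have [a12|oa1] := even_prime pa1; first by move: Ha; rewrite -ltnS a12.
  by move: oa1; rewrite /= oa.
rewrite addnA -[(uphalf n).+1]add1n; apply: leq_add => //.
by apply: IH; lia.
Qed.

Lemma rho_le m : 2 * rho m <= m.
Proof.
case: m => [|m]; first by [].
have a3 : 3 <= (2 * m.+1).+1 by lia.
have H := count_prime_window (3 * m.+1 - (2 * m.+1).+1) a3.
rewrite /rho /plist size_rev size_filter.
apply: leq_trans (_ : 2 * (3 * m.+1 - (2 * m.+1).+1).+1./2 <= _).
  by rewrite leq_mul2l H orbT.
have -> : (3 * m.+1 - (2 * m.+1).+1).+1 = m.+1 by lia.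
by rewrite -[X in _ <= X](odd_double_half m.+1) mul2n leq_addl.
Qed.

Lemma rho_lt_pr m i : i < rho m -> 2 * rho m < pr m i.
Proof. by move=> /pr_bounds; have := rho_le m; lia. Qed.

Lemma kk_gt0 m : 2 <= rho m -> 0 < kk m.
Proof. by have := rho_le m; rewrite /kk; nia. Qed.

Lemma multiple_le_kk m i l : i < rho m -> 0 < l <= 2 * rho m -> 0 < l * pr m i <= kk m.
Proof.
move=> Hi /andP[l0 l2]; have := pr_bounds Hi; have := pr_gt0 Hi.
have : l * pr m i <= 2 * rho m * pr m i by rewrite leq_mul2r l2 orbT.
by rewrite /kk muln_gt0 l0; nia.
Qed.

Lemma prime_ndvd_small_multiple p p' l : prime p -> prime p' -> p != p' ->
  0 < l < p -> ~~ (p %| l * p').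
Proof.
move=> pp pp' ne /andP[l0 lp]; rewrite Euclid_dvdM // negb_or (dvdn_prime2 pp pp') ne andbT.
by apply/negP => /(dvdn_leq l0); rewrite leqNgt lp.
Qed.

Lemma pr_ndvd_multiple m i i' l : i < rho m -> i' < rho m -> i != i' ->
  0 < l <= 2 * rho m -> ~~ (pr m i %| l * pr m i').
Proof.
move=> Hi Hi' ne /andP[l0 l2]; apply: prime_ndvd_small_multiple; rewrite ?pr_prime //.
  by apply: contra ne => /eqP /(pr_inj Hi Hi') ->.
by rewrite l0 (leq_ltn_trans l2 (rho_lt_pr Hi)).
Qed.

Lemma multiples_disjoint m i1 i2 l1 l2 : i1 < rho m -> i2 < rho m ->
  0 < l1 <= 2 * rho m -> 0 < l2 <= 2 * rho m -> l1 * pr m i1 = l2 * pr m i2 ->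
  i1 = i2 /\ l1 = l2.
Proof.
move=> H1 H2 L1 L2 E; case: (eqVneq i1 i2) => [e|ne].
  by subst i2; split => //; apply/eqP; rewrite -(eqn_pmul2r (pr_gt0 H1)) E.
by move: (pr_ndvd_multiple H1 H2 ne L2); rewrite -E dvdn_mull.
Qed.

Lemma abar_as_sum m j : abar m j =
  (\sum_(0 <= i < rho m) \sum_(1 <= l < (2 * rho m)%N.+1)
     (if j == (l * pr m i)%N then wgt m l else 0))%R.
Proof.
rewrite /abar; set good := fun p => _.
case: (boolP (has good (plist m))) => hg; last first.
  have -> : find good (plist m) < rho m = false by rewrite -has_find (negbTE hg).
  symmetry; apply: big1_seq => i /andP[_]; rewrite mem_iota add0n subn0 => /andP[_ Hi].
  apply: big1_seq => l /andP[_]; rewrite mem_iota => Hl.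
  case: eqP => // Ej; case/negP: hg; apply/hasP; exists (pr m i); first exact: pr_mem.
  by rewrite /good Ej dvdn_mull // mulnK ?pr_gt0 //; lia.
have fl : find good (plist m) < rho m by rewrite -has_find.
move: (nth_find 0 hg); rewrite fl /good -/(pr m _).
set i0 := find _ _; set l0 := j %/ _ => /andP[dv rg].
have -> : j = l0 * pr m i0 by rewrite divnK.
rewrite -(big_pick_nat +%R (fun=> wgt m l0) (_ : 0 <= i0 < rho m)) //.
apply: eq_big_nat => i /andP[_ Hi]; case: eqP => [->|ne].
  rewrite -(big_pick_nat +%R (wgt m) (_ : 1 <= l0 < (2 * rho m).+1)) //.
  by apply: eq_big_nat => l _; rewrite eqn_pmul2r ?pr_gt0 // eq_sym.
symmetry; apply: big1_seq => l /andP[_]; rewrite mem_iota => Hl; case: eqP => // E.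
have Hl' : 0 < l <= 2 * rho m by lia.
by have [e _] := multiples_disjoint fl Hi rg Hl' E; case: ne.
Qed.

Lemma wgt_le2 m l : (wgt m l <= 2)%R.
Proof. by rewrite /wgt; repeat case: ifP. Qed.

Lemma sum_const_range (a b : nat) (c : int) (F : nat -> int) : a <= b ->
  (forall l, a <= l < b -> F l = c) -> (\sum_(a <= l < b) F l = c * (b - a)%:Z)%R.
Proof. by move=> ab H; rewrite (eq_big_nat _ _ H) sumr_const_nat -mulr_natr natz. Qed.

Lemma sum_wgt m : 2 <= rho m ->
  (\sum_(1 <= l < (2 * rho m)%N.+1) wgt m l = thetabar m)%R.
Proof.
rewrite /wgt /thetabar; set R := rho m => R2.
have [a Ea] : exists a, R = odd R + 2 * a by exists R./2; rewrite -{1}(odd_double_half R) mul2n.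
case: (odd R) in Ea *; rewrite /=.
  have -> : (3 * R - 1) %/ 2 = 3 * a + 1.
    by rewrite Ea (_ : 3 * (1 + 2 * a) - 1 = (3 * a + 1) * 2) ?mulnK //; lia.
  rewrite (big_cat_nat _ (n := (3 * a + 1).+1)) /=; [|lia|lia].
  rewrite (big_cat_nat _ (n := (2 * R - 2).+1) (m := (3 * a + 1).+1)) /=; [|lia|lia].
  rewrite (sum_const_range (c := 2)) => [|//|l /andP[_ H]]; last by rewrite ifT //; lia.
  rewrite (sum_const_range (c := -2)) => [|//|l /andP[H1 H2]]; first last.
  - by rewrite ifF ?ifT //; lia.
  - lia.
  rewrite (sum_const_range (c := -1)) => [|//|l /andP[H1 H2]]; first last.
  - by rewrite ifF ?ifF //; lia.
  - lia.
  lia.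
have -> : (3 * R) %/ 2 = 3 * a by rewrite Ea add0n (_ : 3 * (2 * a) = 3 * a * 2) ?mulnK //; lia.
rewrite (big_cat_nat _ (n := (3 * a).+1)) /=; [|lia|lia].
rewrite (sum_const_range (c := 2)) => [|//|l /andP[_ H]]; last by rewrite ifT //; lia.
rewrite (sum_const_range (c := -2)) => [|//|l /andP[H1 H2]]; first last.
- by rewrite ifF //; lia.
- lia.
lia.
Qed.

Lemma abar_conv m (z : nat -> int) :
  (\sum_(1 <= j < (kk m).+1) abar m j * z j =
   \sum_(0 <= i < rho m) \sum_(1 <= l < (2 * rho m)%N.+1) wgt m l * z (l * pr m i)%N)%R.
Proof.
under eq_bigr => j _ do rewrite abar_as_sum mulr_suml.
rewrite exchange_big_nat /=; apply: eq_big_nat => i /andP[_ Hi].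
under eq_bigr => j _ do rewrite mulr_suml.
rewrite exchange_big_nat /=; apply: eq_big_nat => l Hl.
rewrite -(big_pick_nat +%R (fun j => (wgt m l * z j)%R) (_ : 1 <= l * pr m i < (kk m).+1)).
  by apply: eq_bigr => j _; case: eqP => // _; rewrite mul0r.
by have := multiple_le_kk Hi Hl; rewrite ltnS.
Qed.

Lemma b_as_sum m f : 0 < rho m -> b m f =
  (\sum_(1 <= j < (kk m).+1) (if f == (rho m * j)%N then abar m j else 0))%R.
Proof.
move=> R0; rewrite /b; case: ifP => [/andP[dv rg]|nb].
  rewrite -(big_pick_nat +%R (abar m) (_ : 1 <= f %/ rho m < (kk m).+1)) //.
  apply: eq_big_nat => j _; congr (if _ then _ else _).
  by rewrite -{2}(divnK dv) [_ * rho m]mulnC eqn_pmul2l // eq_sym.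
symmetry; apply: big1_seq => j /andP[_]; rewrite mem_iota => Hj.
case: eqP => // Ef; move: nb; rewrite Ef dvdn_mulr // mulKn //; lia.
Qed.

Lemma b_conv m (z : nat -> int) : 0 < rho m ->
  (\sum_(1 <= f < (hh m).+1) b m f * z f =
   \sum_(1 <= j < (kk m).+1) abar m j * z (rho m * j)%N)%R.
Proof.
move=> R0; under eq_bigr => f _ do rewrite b_as_sum // mulr_suml.
rewrite exchange_big_nat /=; apply: eq_big_nat => j Hj.
rewrite -(big_pick_nat +%R (fun f => (abar m j * z f)%R) (_ : 1 <= rho m * j < (hh m).+1)).
  by apply: eq_bigr => f _; case: eqP => // _; rewrite mul0r.
by rewrite /hh ltnS leq_mul2l; move: Hj R0; clear; nia.
Qed.

Lemma foreign_shift_unique m i i' a c l1 l2 : i < rho m -> i' < rho m -> i != i' ->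
  l1 < l2 <= 2 * rho m -> l2 * pr m i' <= a ->
  a - l1 * pr m i' = c %[mod pr m i] -> a - l2 * pr m i' = c %[mod pr m i] -> False.
Proof.
move=> Hi Hi' ne /andP[l12 l2R] la E1 E2.
have l21 : 0 < l2 - l1 <= 2 * rho m by apply/andP; split; lia.
have lp : l1 * pr m i' <= l2 * pr m i' by rewrite leq_mul2r ltnW ?orbT.
have shift : a - l2 * pr m i' + (l2 - l1) * pr m i' = a - l1 * pr m i'.
  by rewrite mulnBl; lia.
move/negP: (pr_ndvd_multiple Hi Hi' ne l21); apply.
have : a - l2 * pr m i' + (l2 - l1) * pr m i' = a - l2 * pr m i' + 0 %[mod pr m i].
  by rewrite addn0 shift E1 E2.
by move/eqP; rewrite eqn_modDl mod0n.
Qed.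

(* One step of the recurrence preserves the indicator of a residue class
   modulo p_i: the p_i-multiples reproduce the class with total weight theta,
   while each other prime p_{i'} contributes at most one hit of weight <= 2,
   and none at all when the point itself lies in the class. *)
Section ClassStep.
Variables (m i a c : nat).
Hypotheses (R2 : 2 <= rho m) (Hi : i < rho m) (Ka : kk m <= a).

Let hit (i' l : nat) : nat := a - l * pr m i' == c %[mod pr m i].

Let shift_le (i' l : nat) : i' < rho m -> 1 <= l < (2 * rho m).+1 -> l * pr m i' <= a.
Proof. by move=> Hi' Hl; have /andP[_ H] := multiple_le_kk Hi' Hl; apply: leq_trans Ka. Qed.

Lemma self_term :
  (\sum_(1 <= l < (2 * rho m)%N.+1) wgt m l * Posz (hit i l) =
   Posz (a == c %[mod pr m i]) * thetabar m)%R.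
Proof.
rewrite -sum_wgt // mulr_sumr; apply: eq_big_nat => l Hl; rewrite mulrC.
congr (Posz _ * _)%R; rewrite /hit -(eqn_modDr (l * pr m i)) subnK ?shift_le //.
by rewrite addnC modnMDl.
Qed.

Lemma foreign_term_le2 i' : i' < rho m -> i != i' ->
  (\sum_(1 <= l < (2 * rho m)%N.+1) wgt m l * Posz (hit i' l) <= 2)%R.
Proof.
move=> Hi' ne; have hits_le1 : \sum_(1 <= l < (2 * rho m).+1) hit i' l <= 1.
  apply: sum_01_le1 => [l|l1 l2 h1 h12 h2 H1 H2]; first by rewrite /hit; case: eqP.
  have l12 : l1 < l2 <= 2 * rho m by rewrite h12 -ltnS.
  have l2R : 1 <= l2 < (2 * rho m).+1 by apply/andP; split; lia.
  have hitE l : 0 < hit i' l -> a - l * pr m i' = c %[mod pr m i] by rewrite /hit; case: eqP.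
  exact: (foreign_shift_unique Hi Hi' ne l12 (shift_le Hi' l2R) (hitE _ H1) (hitE _ H2)).
apply: (le_trans (y := (2 * Posz (\sum_(1 <= l < (2 * rho m).+1) hit i' l)%N)%R)).
  rewrite (big_morph Posz PoszD (erefl (Posz 0))) mulr_sumr.
  by apply: ler_sum_nat => l _; apply: ler_wpM2r; [| exact: wgt_le2].
by rewrite -[2%R]mulr1 ler_wpM2l // lez_nat.
Qed.

Lemma foreign_term_zero i' : i' < rho m -> i != i' -> a == c %[mod pr m i] ->
  (\sum_(1 <= l < (2 * rho m)%N.+1) wgt m l * Posz (hit i' l) = 0)%R.
Proof.
move=> Hi' ne /eqP Ea; apply: big1_seq => l /andP[_]; rewrite mem_iota subn1 add1n /= => Hl.
rewrite /hit; case: eqP => [H|_]; last by rewrite mulr0.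
have E0 : a - 0 * pr m i' = c %[mod pr m i] by rewrite mul0n subn0.
by case: (foreign_shift_unique Hi Hi' ne Hl (shift_le Hi' Hl) E0 H).
Qed.

Lemma class_step :
  ind ((\sum_(0 <= i' < rho m) \sum_(1 <= l < (2 * rho m)%N.+1)
          wgt m l * Posz (hit i' l)) - thetabar m)%R = (a == c %[mod pr m i]).
Proof.
rewrite (big_split_one _ _ (_ : 0 <= i < rho m)) //= self_term /ind.
case: eqP => [Ea|Na].
  rewrite big1_seq ?mul1r ?addr0 ?subrr // => i' /andP[_]; rewrite mem_iota => Hi'.
  by case: eqP => [//|/eqP ne]; rewrite foreign_term_zero 1?eq_sym //; [lia | apply/eqP].
rewrite mul0r add0r subr_ge0 leNgt; set S := (\sum_(_ <= _ < _) _)%R.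
suff -> : (S < thetabar m)%R by [].
apply: le_lt_trans (_ : (\sum_(0 <= i' < rho m) (if i' == i then 0 else 2))%R < _)%R.
  apply: ler_sum_nat => i' Hi'; case: eqP => [//|/eqP ne].
  by apply: foreign_term_le2; [lia | rewrite eq_sym].
have Hn := big_split_one addn (fun=> 2) (_ : 0 <= i < rho m).
rewrite /= sum_nat_const_nat subn0 in Hn.
have -> : (\sum_(0 <= i' < rho m) (if i' == i then 0 else 2) =
          Posz (\sum_(0 <= i' < rho m) (if i' == i then 0 else 2))%N)%R.
  by rewrite (big_morph Posz PoszD (erefl (Posz 0))); apply: eq_bigr => i' _; case: eqP.
by rewrite /thetabar ltz_nat; move: (Hn Hi); lia.
Qed.
End ClassStep.

Lemma recurrence_keeps_class m i e (u : nat -> nat) : 2 <= rho m -> i < rho m ->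
  (forall j, j < kk m -> u j = (j + e == kk m %[mod pr m i])) ->
  (forall j, kk m <= j -> u j =
     ind ((\sum_(0 <= i' < rho m) \sum_(1 <= l < (2 * rho m)%N.+1)
             wgt m l * Posz (u (j - l * pr m i')%N)) - thetabar m)%R) ->
  forall j, u j = (j + e == kk m %[mod pr m i]).
Proof.
move=> R2 Hi u_init u_rec; elim/ltn_ind => j IH.
case: (ltnP j (kk m)) => jK; first exact: u_init.
rewrite u_rec // -(class_step (kk m) R2 Hi (leq_trans jK (leq_addr e j))) /=.
congr (ind (_ - _)); apply: eq_big_nat => i' Hi'; apply: eq_big_nat => l Hl.
have /andP[lp0 lpK] := multiple_le_kk (andP Hi').2 Hl.
by rewrite IH ?addnBAC //; [apply: leq_trans jK | lia].
Qed.

(* Closed form of x^{alpha_i}: the initial block marks the residue class of k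
   modulo p_i, and the recurrence propagates it. *)
Lemma x_init_class m i j : i < rho m -> j < kk m ->
  x_init m i j = (j == kk m %[mod pr m i]).
Proof.
move=> Hi jK; have p0 := pr_gt0 Hi; rewrite /x_init /beta /mu.
have -> : kk m - pr m i * (kk m %/ pr m i) = kk m %% pr m i.
  by rewrite mulnC {1}(divn_eq (kk m) (pr m i)) addKn.
set P := has _ _; suff -> : P = (j == kk m %[mod pr m i]) by case: (_ == _).
apply/idP/idP => [/hasP[l _ /eqP ->]|/eqP E]; first by rewrite addnC modnMDl modn_mod.
apply/hasP; exists (j %/ pr m i).
  rewrite mem_iota add0n -(ltn_pmul2r p0).
  move: (divn_eq j (pr m i)) (divn_eq (kk m) (pr m i)); rewrite E.
  by set a := j %/ _ * _; set b := kk m %/ _ * _; lia.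
by rewrite {1}(divn_eq j (pr m i)) E addnC.
Qed.

Lemma x_class m i t : 2 <= rho m -> i < rho m -> x m i t = (t == kk m %[mod pr m i]).
Proof.
move=> R2 Hi; rewrite -[t in RHS]addn0.
apply: (recurrence_keeps_class (u := x m i)) => // j jK; rewrite /x -/(lin_val _ _ _ _ j).
  by rewrite lin_val_init // addn0 x_init_class.
by rewrite lin_val_rec // (abar_conv m (fun j' => Posz (lin_val _ _ _ _ (j - j')))).
Qed.

Lemma y_class m i j : 2 <= rho m -> i < rho m ->
  y m (rho m * j + i) = (j + 1 == kk m %[mod pr m i]).
Proof.
move=> R2 Hi; have R0 : 0 < rho m by lia.
have Em j' : (rho m * j' + i) %% rho m = i by rewrite mulnC modnMDl modn_small.
have Ed j' : (rho m * j' + i) %/ rho m = j' by rewrite mulnC divnMDl // divn_small // addn0.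
move: j; apply: (@recurrence_keeps_class m i 1 (fun j => y m (rho m * j + i)) R2 Hi) => j' jK.
  rewrite /y -/(lin_val _ _ _ _ _) lin_val_init; last by rewrite /hh; nia.
  by rewrite /y_init Em Ed x_class // addnC.
rewrite /y -/(lin_val _ _ _ _ _) lin_val_rec; last by rewrite /hh; nia.
rewrite b_conv // abar_conv; congr (ind (_ - _)).
apply: eq_big_nat => i' Hi'; apply: eq_big_nat => l Hl.
have /andP[_ H] := multiple_le_kk (andP Hi').2 Hl.
have lj : rho m * (l * pr m i') <= rho m * j' by rewrite leq_mul2l (leq_trans H jK) orbT.
by rewrite mulnBr addnBAC.
Qed.

Definition W m i v : bool := v == rho m * (kk m - 1) + i %[mod rho m * pr m i].

Lemma W_residue m i v : i < rho m -> W m i v -> v %% rho m = i.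
Proof.
move=> Hi /eqP E; have := congr1 (modn^~ (rho m)) E.
by rewrite !modn_dvdm ?dvdn_mulr // => ->; rewrite mulnC modnMDl modn_small.
Qed.

Lemma y_W m v : 2 <= rho m -> y m v = W m (v %% rho m) v.
Proof.
move=> R2; have R0 : 0 < rho m by lia.
set i := v %% rho m; have Hi : i < rho m by exact: ltn_pmod.
rewrite {1}(divn_eq v (rho m)) -/i mulnC y_class //; congr nat_of_bool.
rewrite /W {2}(divn_eq v (rho m)) -/i mulnC eqn_modDr -!muln_modr eqn_pmul2l //.
by rewrite -(eqn_modDr 1 (v %/ rho m)) subnK // kk_gt0.
Qed.

(* Since the classes W_i are disjoint, y is their sum. *)
Lemma y_sum_W m v : 2 <= rho m -> y m v = \sum_(0 <= i < rho m) W m i v.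
Proof.
move=> R2; have R0 : 0 < rho m by lia.
rewrite y_W // (big_split_one _ _ (_ : 0 <= v %% rho m < rho m)) ?ltn_pmod //=.
rewrite big1_seq ?addn0 //.
move=> i /andP[_]; rewrite mem_iota => Hi; case: eqP => // ne.
by case Wi: (W m i v) => //; case: ne; rewrite (W_residue _ Wi) //; lia.
Qed.

Lemma y_le1 m v : 2 <= rho m -> y m v <= 1.
Proof. by move=> R2; rewrite y_W //; case: (W _ _ _). Qed.

Lemma eqn_mod_subr q a b g : g <= a -> g <= b -> (a - g == b - g %[mod q]) = (a == b %[mod q]).
Proof. by move=> ga gb; rewrite -(eqn_modDr g) !subnK. Qed.

Lemma eqn_mod_subl q a g1 g2 : g1 <= a -> g2 <= a ->
  (a - g1 == a - g2 %[mod q]) = (g1 == g2 %[mod q]).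
Proof.
move=> h1 h2; rewrite -(eqn_modDr (g1 + g2)).
have -> : a - g1 + (g1 + g2) = a + g2 by lia.
have -> : a - g2 + (g1 + g2) = a + g1 by lia.
by rewrite eqn_modDl eq_sym.
Qed.

Lemma W_shift_dvd m i a g1 g2 : g1 <= g2 -> g2 <= a ->
  W m i (a - g1) -> W m i (a - g2) -> rho m * pr m i %| g2 - g1.
Proof.
move=> g12 g2a /eqP E1 /eqP E2; rewrite -eqn_mod_dvd // eq_sym.
by rewrite -(eqn_mod_subl _ (leq_trans g12 g2a) g2a) E1 E2.
Qed.

(* Products of two of the primes exceed k = (6m - 1) rho, as p_i > 2m >= 4 rho. *)
Lemma kk_lt_pr_mul m i i' : i < rho m -> i' < rho m -> kk m < pr m i * pr m i'.
Proof.
move=> Hi Hi'; have := rho_le m; have := pr_bounds Hi; have := pr_bounds Hi'.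
move=> B1 B2 B3; have : (2 * m).+1 * (2 * m).+1 <= pr m i * pr m i' by apply: leq_mul; lia.
by rewrite /kk; nia.
Qed.

(* The window [1, h] is too short for a shift divisible by both rho p_i and
   rho p_{i'}, since k < p_i p_{i'}. *)
Lemma window_too_short m i i' D : 2 <= rho m -> i < rho m -> i' < rho m -> i != i' ->
  0 < D <= hh m -> rho m * pr m i %| D -> rho m * pr m i' %| D -> False.
Proof.
move=> R2 Hi Hi' ne /andP[D0 Dh] D1 D2; have R0 : 0 < rho m by lia.
have /dvdnP[q Eq] : rho m %| D by apply: dvdn_trans D1; apply: dvdn_mulr.
rewrite Eq [q * _]mulnC dvdn_pmul2l // in D1.
rewrite Eq [q * _]mulnC dvdn_pmul2l // in D2.
have cop : coprime (pr m i) (pr m i').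
  rewrite prime_coprime ?pr_prime // dvdn_prime2 ?pr_prime //.
  by apply: contra ne => /eqP /(pr_inj Hi Hi') ->.
have q0 : 0 < q by move: D0; rewrite Eq muln_gt0 => /andP[].
have := dvdn_leq q0 (_ : pr m i * pr m i' %| q); rewrite Gauss_dvd // D1 D2 => /(_ isT).
have PP := kk_lt_pr_mul Hi Hi'.
move: Dh; rewrite Eq /hh mulnC leq_mul2l eqn0Ngt R0 /= => qK.
by rewrite leqNgt (leq_ltn_trans qK PP).
Qed.

Lemma y_double_hit m a b g1 g2 : 2 <= rho m -> g1 < g2 <= hh m -> g2 <= a -> g2 <= b ->
  g1 = g2 %[mod rho m] ->
  0 < y m (a - g1) -> 0 < y m (a - g2) -> 0 < y m (b - g1) -> 0 < y m (b - g2) ->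
  a = b %[mod rho m].
Proof.
move=> R2 /andP[g12 g2h] g2a g2b Eg ya1 ya2 yb1 yb2; have R0 : 0 < rho m by lia.
have g1a : g1 <= a by lia.
have g1b : g1 <= b by lia.
have same_class c : g2 <= c -> (c - g2) %% rho m = (c - g1) %% rho m.
  by move=> g2c; apply/eqP; rewrite eqn_mod_subl ?Eg //; lia.
have class_W c : 0 < y m (c - g1) -> 0 < y m (c - g2) -> g2 <= c ->
    rho m * pr m ((c - g1) %% rho m) %| g2 - g1.
  move=> y1 y2 g2c; rewrite y_W // in y1; rewrite y_W // same_class // in y2.
  have W1 : W m ((c - g1) %% rho m) (c - g1) by case: (W _ _ _) y1.
  have W2 : W m ((c - g1) %% rho m) (c - g2) by case: (W _ _ _) y2.
  exact: (W_shift_dvd (ltnW g12) g2c W1 W2).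
apply/eqP; rewrite -(eqn_mod_subr _ g1a g1b); apply/eqP.
case: (eqVneq ((a - g1) %% rho m) ((b - g1) %% rho m)) => // ne.
case: (window_too_short R2 (ltn_pmod _ R0) (ltn_pmod _ R0) ne _ (class_W _ ya1 ya2 g2a)
        (class_W _ yb1 yb2 g2b)).
by rewrite subn_gt0 g12 /= (leq_trans (leq_subr _ _) g2h).
Qed.

(* The point N = h + L_1(d) - rho, so that B_0(d) = {f : y(N - f) = 1}. *)
Definition anchor m d : nat := hh m + L1 m d - rho m.

Lemma rho_le_L1 m d : d < rho m -> rho m <= L1 m d.
Proof.
move=> dR; rewrite /L1 -{1}[rho m]muln1 leq_mul2l; apply/orP; right.
apply: (big_ind (fun x => 0 < x)) => // [x z hx hz|i _]; first by rewrite lcmn_gt0 hx hz.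
by apply: pr_gt0; have := ltn_ord i; lia.
Qed.

Lemma anchor_ge m d : d < rho m -> hh m <= anchor m d.
Proof. by move=> /rho_le_L1; rewrite /anchor; lia. Qed.

(* N is a multiple of rho. *)
Lemma anchor_add_mod m d l : d < rho m -> l < rho m -> (anchor m d + l) %% rho m = l.
Proof.
move=> dR lR; have /dvdnP[q ->] : rho m %| anchor m d.
  by apply: dvdn_sub => //; apply: dvdn_add; exact: dvdn_mulr.
by rewrite modnMDl modn_small.
Qed.

Lemma d_le_hh m d : 2 <= rho m -> d < rho m -> d <= hh m.
Proof. by move=> R2 dR; have := kk_gt0 R2; rewrite /hh; nia. Qed.

Lemma sum_uniq_range (s : seq nat) a k (F : nat -> nat) : uniq s ->
  (forall x, x \in s -> a <= x < a + k) ->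
  \sum_(x <- s) F x = \sum_(a <= x < a + k) (x \in s) * F x.
Proof.
move=> us sr; have P : perm_eq s [seq x <- iota a k | x \in s].
  apply: uniq_perm => //; first by rewrite filter_uniq // iota_uniq.
  by move=> x; rewrite mem_filter mem_iota; case xs: (x \in s) => //=; rewrite sr.
rewrite (perm_big _ P) big_filter /index_iota addKn big_mkcond /=.
by apply: eq_bigr => x _; case: (x \in s); rewrite ?mul1n ?mul0n.
Qed.

Lemma memB0 m d f : (f \in B0 m d) =
  (1 <= f <= hh m - d) && (y m (anchor m d - f) == 1).
Proof. by rewrite /B0 mem_filter mem_iota andbC add1n. Qed.

Lemma memA m d g :
  reflect (exists2 l, l <= d & exists2 f, f \in B0 m d & g = l + f) (g \in A m d).
Proof.
rewrite /A mem_undup; apply: (iffP flattenP).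
  move=> [s /mapP[l]]; rewrite mem_iota => /andP[_ ld] -> /mapP[f fB ->].
  by exists l; [lia | exists f].
move=> [l ld [f fB ->]]; exists (Bl m d l); last by apply/mapP; exists f.
by apply/mapP; exists l => //; rewrite mem_iota; lia.
Qed.

Lemma A_sum m d n : d <= hh m ->
  \sum_(f <- A m d) y m (n - f) = \sum_(1 <= g < (hh m).+1) (g \in A m d) * y m (n - g).
Proof.
move=> dh; rewrite (sum_uniq_range _ (k := hh m) (a := 1)) ?undup_uniq //.
move=> g /memA[l ld [f]]; rewrite memB0 => /andP[/andP[f1 f2] _] ->; lia.
Qed.

Lemma Tot_sum m d : 2 <= rho m ->
  Tot m d = \sum_(1 <= f < (hh m - d).+1) y m (anchor m d - f).
Proof.
move=> R2; rewrite /Tot /B0 size_filter -sum1_count big_mkcond /index_iota subSS subn0.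
by apply: eq_bigr => f _; have := y_le1 (hh m + L1 m d - rho m - f) R2; case: (y _ _) => [|[|]].
Qed.

(* Indicator of g \in l + B_0(d). *)
Definition in_translate m d l g : nat :=
  ((l < g) && (g - l <= hh m - d)) * y m (anchor m d + l - g).

Lemma in_translate_le1 m d l g : 2 <= rho m -> in_translate m d l g <= 1.
Proof. by move=> R2; rewrite /in_translate; case: (_ && _); rewrite ?mul1n ?y_le1. Qed.

Lemma in_translate_mulP m d l g z : 0 < in_translate m d l g * z ->
  [/\ l < g, g - l <= hh m - d, 0 < y m (anchor m d + l - g) & 0 < z].
Proof.
by rewrite /in_translate; case: andP => [[lg gl]|]; rewrite ?mul1n ?mul0n // muln_gt0 => /andP[].
Qed.

Lemma A_weighted_le m d (Z : nat -> nat) : 2 <= rho m ->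
  \sum_(1 <= g < (hh m).+1) (g \in A m d) * Z g <=
  \sum_(0 <= l < d.+1) \sum_(1 <= g < (hh m).+1) in_translate m d l g * Z g.
Proof.
move=> R2; rewrite exchange_big_nat; apply: leq_sum => g _; rewrite -big_distrl leq_mul2r.
apply/orP; right; case: (boolP (g \in A m d)) => [/memA[l ld [f fB Eg]]|] //=.
move: fB; rewrite memB0 => /andP[/andP[f1 f2] /eqP yf].
apply: leq_trans (sum_ge_term (in_translate m d ^~ g) (_ : 0 <= l < d.+1)); last by lia.
rewrite /in_translate (_ : anchor m d + l - g = anchor m d - f) ?yf ?muln1; last by lia.
by rewrite (_ : (l < g) && (g - l <= hh m - d)) //; apply/andP; split; lia.
Qed.

(* Each class W_i has at least 2 rho representatives among N - f, 1 <= f <= h - d,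
   since h - d >= 2 rho (rho p_i). *)
Lemma Tot_class_ge m d i : 2 <= rho m -> d < rho m -> i < rho m ->
  2 * rho m <= \sum_(1 <= f < (hh m - d).+1) W m i (anchor m d - f).
Proof.
move=> R2 dR Hi; set s := rho m * pr m i.
have s0 : 0 < s by rewrite muln_gt0 pr_gt0 //; lia.
have span : 2 * rho m * s <= hh m - d.
  have h1 : s <= rho m * (3 * m - 1) by rewrite leq_mul2l; have := pr_bounds Hi; lia.
  have h2 : 2 * rho m * s <= 2 * rho m * (rho m * (3 * m - 1)) by rewrite leq_mul2l h1 orbT.
  have h3 : rho m <= rho m * rho m by rewrite leq_pmulr; lia.
  move: h2 h3; rewrite /hh /kk; nia.
have := @residue_count (anchor m d) (rho m * (kk m - 1) + i) s (2 * rho m) 1 s0.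
rewrite (_ : 1 + 2 * rho m * s <= (anchor m d).+1); last by have := anchor_ge dR; lia.
move=> /(_ isT) H; apply: (leq_trans H).
by rewrite [X in _ <= X](big_cat_nat _ (n := 1 + 2 * rho m * s)) ?leq_addr //=; lia.
Qed.

Lemma Tot_ge m d : 2 <= rho m -> d < rho m -> 2 * rho m * rho m <= Tot m d.
Proof.
move=> R2 dR; rewrite Tot_sum // (eq_bigr _ (fun f _ => y_sum_W _ R2)) exchange_big_nat.
apply: leq_trans (_ : \sum_(0 <= i < rho m) 2 * rho m <= _).
  by rewrite sum_nat_const_nat subn0 mulnC.
by apply: leq_sum_nat => i /andP[_ Hi]; exact: Tot_class_ge.
Qed.

(* Case n mod rho > d: a translate l + B_0 meets the support of y(n - .) in at
   most one point per residue class modulo rho. *)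
Lemma translate_meets_le_rho m d n l : 2 <= rho m -> d < rho m -> hh m <= n ->
  d < n %% rho m -> l <= d ->
  \sum_(1 <= g < (hh m).+1) in_translate m d l g * y m (n - g) <= rho m.
Proof.
move=> R2 dR hn nd ld; have R0 : 0 < rho m by lia.
have HN := anchor_ge dR.
apply: sum_01_pigeon => // [g|g1 g2 h1 h12 h2 gg P1 P2].
  by rewrite -[1]muln1 leq_mul ?in_translate_le1 ?y_le1.
move/in_translate_mulP: P1 => [_ _ y1 y1'].
move/in_translate_mulP: P2 => [l2 b2 y2 y2'].
have g12 : g1 < g2 <= hh m by apply/andP; split; lia.
have gN : g2 <= anchor m d + l by lia.
have := y_double_hit R2 g12 (leq_trans (andP g12).2 hn) gN gg y1' y2' y1 y2.
rewrite anchor_add_mod; [|lia|lia] => E.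
by move: nd; rewrite E; lia.
Qed.

(* Hence for n mod rho > d the left-hand side is at most (d + 1) rho <= rho^2. *)
Lemma large_residue_bound m d n : 2 <= rho m -> d < rho m -> hh m <= n ->
  d < n %% rho m ->
  \sum_(1 <= g < (hh m).+1) (g \in A m d) * y m (n - g) < Tot m d.
Proof.
move=> R2 dR hn nd; apply: leq_ltn_trans (A_weighted_le _ _ R2) _.
apply: leq_ltn_trans (_ : \sum_(0 <= l < d.+1) rho m < _).
  by apply: leq_sum_nat => l /andP[_ ld]; apply: translate_meets_le_rho.
apply: leq_trans (Tot_ge R2 dR); rewrite sum_nat_const_nat subn0.
have : d.+1 * rho m <= rho m * rho m by rewrite leq_mul2r dR orbT.
by nia.
Qed.

(* Case n mod rho = l0 <= d.  The translate l0 + B_0 spans a window of h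
   shifts around the h - d shifts of B_0 itself. *)
Lemma translate_window (F : nat -> nat) N h d l : l <= d -> d <= h ->
  \sum_(1 <= g < h.+1) F (N + l - g) =
  \sum_(1 <= g < l.+1) F (N + l - g) + \sum_(1 <= f < (h - d).+1) F (N - f)
  + \sum_((l + (h - d)).+1 <= g < h.+1) F (N + l - g).
Proof.
move=> ld dh; rewrite (big_cat_nat _ (n := l.+1)) /=; [|lia|lia].
rewrite (big_cat_nat _ (n := (l + (h - d)).+1) (m := l.+1)) /=; [|lia|lia].
rewrite addnA; congr (_ + _ + _).
rewrite -[l.+1]add1n big_addn (_ : (l + (h - d)).+1 - l = (h - d).+1); last by lia.
by apply: eq_big_nat => f _; rewrite subnDr.
Qed.

Lemma shifted_class_ge m d i l : 2 <= rho m -> d < rho m -> i < rho m -> l <= d ->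
  2 * rho m <= \sum_(1 <= g < (hh m).+1) W m i (anchor m d + l - g).
Proof.
move=> R2 dR Hi ld; rewrite (translate_window (W m i) _ ld (d_le_hh R2 dR)).
by apply: leq_trans (Tot_class_ge R2 dR Hi) _; rewrite -addnA addnCA leq_addr.
Qed.

Lemma shifted_y_le m d l : 2 <= rho m -> d < rho m -> l <= d ->
  \sum_(1 <= g < (hh m).+1) y m (anchor m d + l - g) <= Tot m d + d.
Proof.
move=> R2 dR ld; have dh := d_le_hh R2 dR.
rewrite (translate_window (y m) _ ld dh) (Tot_sum _ R2).
have := @sum_01_le_len 1 l.+1 (fun g => y m (anchor m d + l - g)) (fun g => y_le1 _ R2).
have := @sum_01_le_len (l + (hh m - d)).+1 (hh m).+1 (fun g => y m (anchor m d + l - g))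
  (fun g => y_le1 _ R2).
lia.
Qed.

Lemma good_class_contrib m d n l i : d < rho m -> hh m <= n ->
  n == anchor m d + l %[mod rho m * pr m i] ->
  \sum_(1 <= g < (hh m).+1) (g \in A m d) * W m i (n - g) <=
  \sum_(1 <= g < (hh m).+1) W m i (anchor m d + l - g).
Proof.
move=> dR hn good; have HN := anchor_ge dR.
apply: leq_sum_nat => g /andP[g1 g2]; case: (g \in A m d); rewrite ?mul0n ?mul1n //.
have E : n - g = anchor m d + l - g %[mod rho m * pr m i].
  by apply/eqP; rewrite eqn_mod_subr //; lia.
by rewrite /W E.
Qed.

Lemma bad_translate_zero m d n i : 2 <= rho m -> d < rho m -> hh m <= n ->
  n %% rho m <= d -> i < rho m ->
  ~~ (n == anchor m d + n %% rho m %[mod rho m * pr m i]) ->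
  \sum_(1 <= g < (hh m).+1) in_translate m d (n %% rho m) g * W m i (n - g) = 0.
Proof.
move=> R2 dR hn nd Hi bad; have HN := anchor_ge dR.
apply: big1_seq => g /andP[_]; rewrite mem_iota => Hg.
case: (posnP (in_translate m d (n %% rho m) g * W m i (n - g))) => //.
move=> /in_translate_mulP[_ _ yp Wpos].
have Wn : W m i (n - g) by case: (W _ _ _) Wpos.
have gn : g <= n by lia.
have gN : g <= anchor m d + n %% rho m by lia.
have cls : (anchor m d + n %% rho m - g) %% rho m = i.
  rewrite -(W_residue Hi Wn); apply/eqP; rewrite eqn_mod_subr //.
  by rewrite anchor_add_mod ?modn_mod // ltn_pmod //; lia.
move: yp; rewrite y_W // cls; case WN : (W _ _ _) => // _; case/negP: bad.
move: Wn WN; rewrite /W => /eqP Wn /eqP WN.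
by rewrite -(eqn_mod_subr _ gn gN) Wn WN.
Qed.

Lemma other_translate_le1 m d n i l : 2 <= rho m -> d < rho m -> hh m <= n ->
  i < rho m -> l <= d -> l != n %% rho m ->
  \sum_(1 <= g < (hh m).+1) in_translate m d l g * W m i (n - g) <= 1.
Proof.
move=> R2 dR hn Hi ld ne; have HN := anchor_ge dR; have R0 : 0 < rho m by lia.
apply: sum_01_le1 => [g|g1 g2 h1 h12 h2].
  by rewrite -[1]muln1 leq_mul ?in_translate_le1 //; case: (W _ _ _).
move=> /in_translate_mulP[_ _ y1 w1] /in_translate_mulP[l2 b2 y2 w2].
have g12 : g1 < g2 <= hh m by apply/andP; split; lia.
have gn : g2 <= n by lia.
have gN : g2 <= anchor m d + l by lia.
have W1 : W m i (n - g1) by case: (W _ _ _) w1.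
have W2 : W m i (n - g2) by case: (W _ _ _) w2.
have gg : g1 = g2 %[mod rho m].
  apply/eqP; rewrite eq_sym eqn_mod_dvd ?(ltnW h12) //.
  by apply: dvdn_trans (W_shift_dvd (ltnW h12) gn W1 W2); exact: dvdn_mulr.
have yW v : W m i v -> 0 < y m v by move=> Wv; rewrite y_W // (W_residue Hi Wv) Wv.
have := y_double_hit R2 g12 gN gn gg y1 y2 (yW _ W1) (yW _ W2).
rewrite anchor_add_mod; [|lia|lia] => E.
by rewrite E eqxx in ne.
Qed.

Lemma bad_class_contrib m d n i : 2 <= rho m -> d < rho m -> hh m <= n ->
  n %% rho m <= d -> i < rho m ->
  ~~ (n == anchor m d + n %% rho m %[mod rho m * pr m i]) ->
  \sum_(1 <= g < (hh m).+1) (g \in A m d) * W m i (n - g) <= d.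
Proof.
move=> R2 dR hn nd Hi bad; apply: leq_trans (A_weighted_le _ _ R2) _.
rewrite (big_split_one _ _ (_ : 0 <= n %% rho m < d.+1)) //= bad_translate_zero // add0n.
apply: leq_trans (_ : \sum_(0 <= l < d.+1) (if l == n %% rho m then 0 else 1) <= d).
  apply: leq_sum_nat => l /andP[_ ld]; case: eqP => // /eqP ne.
  exact: other_translate_le1.
have := big_split_one addn (fun=> 1) (_ : 0 <= n %% rho m < d.+1).
by rewrite sum_nat_const_nat /= ltnS nd => /(_ isT); lia.
Qed.

Lemma class_contrib_le m d n i : 2 <= rho m -> d < rho m -> hh m <= n ->
  n %% rho m <= d -> i < rho m ->
  \sum_(1 <= g < (hh m).+1) (g \in A m d) * W m i (n - g) <=
  \sum_(1 <= g < (hh m).+1) W m i (anchor m d + n %% rho m - g).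
Proof.
move=> R2 dR hn nd Hi.
case: (boolP (n == anchor m d + n %% rho m %[mod rho m * pr m i])) => good.
  exact: good_class_contrib.
apply: leq_trans (bad_class_contrib R2 dR hn nd Hi good) _.
by apply: leq_trans (shifted_class_ge R2 dR Hi nd); lia.
Qed.

Lemma cong_L2 m a b : 0 < rho m ->
  (forall i, i < rho m -> a == b %[mod rho m * pr m i]) -> a == b %[mod L2 m].
Proof.
move=> R0 H; wlog ba : a b H / b <= a.
  move=> W; case: (leqP b a) => [|/ltnW ab]; first exact: W.
  by rewrite eq_sym; apply: W => // i Hi; rewrite eq_sym; apply: H.
rewrite eqn_mod_dvd //.
have /dvdnP[q Eq] : rho m %| a - b.
  by apply: dvdn_trans (dvdn_mulr (pr m 0) (dvdnn _)) _; rewrite -eqn_mod_dvd // H.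
rewrite Eq /L2 [q * _]mulnC dvdn_pmul2l //; apply/dvdn_biglcmP => [[i Hi]] _ /=.
by rewrite -(dvdn_pmul2l R0) [rho m * q]mulnC -Eq -eqn_mod_dvd // H.
Qed.

(* Case n mod rho = l0 <= d: some class i0 is bad, contributing at most d
   instead of its share G_{i0} >= 2 rho of the budget Tot(d) + d. *)
Lemma small_residue_bound m d n : 2 <= rho m -> d < rho m -> hh m <= n ->
  n %% rho m <= d -> ~~ (n == anchor m d + n %% rho m %[mod L2 m]) ->
  \sum_(1 <= g < (hh m).+1) (g \in A m d) * y m (n - g) < Tot m d.
Proof.
move=> R2 dR hn nd Hbad; have R0 : 0 < rho m by lia.
have [i0 Hi0 bad] : exists2 i0, i0 < rho m &
    ~~ (n == anchor m d + n %% rho m %[mod rho m * pr m i0]).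
  case: (boolP [forall i : 'I_(rho m), n == anchor m d + n %% rho m %[mod rho m * pr m i]]).
    move/forallP => allg; case/negP: Hbad.
    by apply: cong_L2 => // i Hi; exact: (allg (Ordinal Hi)).
  by rewrite negb_forall => /existsP[[i Hi] bi]; exists i.
set c := fun i => \sum_(1 <= g < (hh m).+1) (g \in A m d) * W m i (n - g).
set G := fun i => \sum_(1 <= g < (hh m).+1) W m i (anchor m d + n %% rho m - g).
have -> : \sum_(1 <= g < (hh m).+1) (g \in A m d) * y m (n - g) = \sum_(0 <= i < rho m) c i.
  by rewrite exchange_big_nat; apply: eq_bigr => g _; rewrite y_sum_W // big_distrr.
have SG : \sum_(0 <= i < rho m) G i <= Tot m d + d.
  apply: leq_trans (shifted_y_le R2 dR nd); rewrite exchange_big_nat.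
  by apply: leq_sum => g _; rewrite y_sum_W.
have Hi00 : 0 <= i0 < rho m by rewrite Hi0.
have cG : \sum_(0 <= i < rho m) (if i == i0 then 0 else c i) <=
          \sum_(0 <= i < rho m) (if i == i0 then 0 else G i).
  by apply: leq_sum_nat => i /andP[_ Hi]; case: eqP => // _; exact: class_contrib_le.
have c0 : c i0 <= d := bad_class_contrib R2 dR hn nd Hi0 bad.
have G0 : 2 * rho m <= G i0 := shifted_class_ge R2 dR Hi0 nd.
move: SG; rewrite (big_split_one _ c Hi00) (big_split_one _ G Hi00) /=.
by move: c0 G0 cG dR; clearbody c G; clear; lia.
Qed.

Theorem lemma16 (m : nat) (Hrho : 2 <= rho m) (d : nat)
  (Hd : d <= rho m - 1) (n : nat) (Hn : hh m <= n)
  (Hcong : forall j, j <= d ->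
     n != hh m - rho m + L1 m d + j %[mod L2 m]) :
  \sum_(f <- A m d) y m (n - f) < Tot m d.
Proof.
have dR : d < rho m by lia.
rewrite A_sum ?d_le_hh //.
case: (leqP (n %% rho m) d) => nd; last exact: large_residue_bound.
apply: small_residue_bound => //.
have Rh : rho m <= hh m by rewrite /hh leq_pmulr // kk_gt0.
have -> : anchor m d = hh m - rho m + L1 m d by rewrite /anchor; lia.
exact: Hcong.
Qed.
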